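(* Let $\Gamma$ be a splice diagram satisfying the edge determinant and semigroup conditions. Then for all nodes $u,v$ of $\Gamma$ and every edge $e$ adjacent to $v$, the admissible co-weight satisfies $w_u\cdot m_{v,e}\geq \ell_{u,v}$, with equality if and only if $e\not\subseteq[u,v]$.
   Context: A splice diagram is a finite tree $\Gamma$ with at least one vertex of valency $\geq3$ and no vertex of valency $2$; vertices of valency $1$ are leaves, the others nodes. For each node $v$ and edge $e$ at $v$ a positive integer weight $d_{v,e}$ is given; $d_{v,u}:=d_{v,e}$ for $e$ the edge at $v$ on the geodesic $[v,u]$; $d_v=\prod_{e\ni v}d_{v,e}$. For distinct vertices $u,v$, $\ell_{u,v}$ is the product of all $d_{w,e}$ with $w$ a node on $[u,v]$ and $e$ an edge at $w$ not in $[u,v]$; $\ell_{v,v}:=d_v$. Edge determinant condition: $d_{u,v}d_{v,u}>\ell_{u,v}$ for each edge between two nodes. Semigroup condition: for each node $v$ and edge $e$ at $v$, $d_v\in\sum_{\lambda\in L(v,e)}\mathbb{N}\,\ell_{v,\lambda}$, $L(v,e)$ being the set of leaves $\lambda$ with $e\subseteq[v,\lambda]$. With $n$ leaves, $\mathbb{R}^n$ has standard basis $(w_\lambda)$ indexed by leaves, and $w_u=\sum_\lambda\ell_{u,\lambda}w_\lambda$ for a node $u$. An admissible co-weight is $m_{v,e}=\sum_{\lambda\in L(v,e)}\alpha_{v,e,\lambda}w_\lambda$ where $\alpha_{v,e,\lambda}\in\mathbb{N}$ are any fixed numbers with $d_v=\sum_{\lambda\in L(v,e)}\alpha_{v,e,\lambda}\ell_{v,\lambda}$.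 When $u=v$, $[u,v]$ is the single vertex $v$. *)

From mathcomp Require Import all_boot.
From Stdlib Require Import ClassicalEpsilon.
Set Implicit Arguments. Unset Strict Implicit. Unset Printing Implicit Defensive.

Definition asb (P : Prop) : bool :=
  if excluded_middle_informative P then true else false.

Section Splice.
Variables (V : finType) (adj : rel V) (d : V -> V -> nat).
(* d v a = weight d_{v,e} at vertex v of the edge e = {v,a} *)

(* simple paths u = x0, x1, ..., xk = v  (the sequence p is x1..xk) *)
Definition gpath (u v : V) (p : seq V) : Prop :=
  path adj u p /\ last u p = v /\ uniq (u :: p).

Definition is_tree : Prop :=
  (forall x y, adj x y = adj y x) /\ (forall x, ~~ adj x x) /\
  (forall u v, exists! p, gpath u v p).

Definition valency (v : V) : nat := #|[pred a | adj v a]|.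
Definition node (v : V) : bool := 3 <= valency v.
Definition leaf (v : V) : bool := valency v == 1.

Definition splice_diagram : Prop :=
  is_tree /\ (exists v, node v) /\ (forall v, valency v != 2) /\
  (forall v a, node v -> adj v a -> 0 < d v a).

Definition on_geod (u v w : V) : bool :=
  asb (exists p, gpath u v p /\ w \in u :: p).

Definition edge_on (u v a b : V) : bool :=
  asb (exists p, gpath u v p /\
        ((a, b) \in zip (u :: p) p \/ (b, a) \in zip (u :: p) p)).

Definition dv (v : V) : nat := \prod_(a | adj v a) d v a.

Definition ell (u v : V) : nat :=
  if u == v then dv v else
  \prod_(w | node w && on_geod u v w)
     \prod_(a | adj w a && ~~ edge_on u v w a) d w a.

Definition Lset (v a : V) : pred V :=
  [pred l | leaf l && edge_on v l v a].

Definition edge_determinant : Prop :=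
  forall u v, node u -> node v -> adj u v -> ell u v < d u v * d v u.

Definition semigroup_cond : Prop :=
  forall v a, node v -> adj v a ->
    exists alpha : V -> nat, dv v = \sum_(l | Lset v a l) alpha l * ell v l.

(* Vectors of R^n with the basis indexed by leaves: functions on V, read only
   at leaves. *)
Definition dotv (x y : V -> nat) : nat := \sum_(l | leaf l) x l * y l.

Definition wvec (u : V) : V -> nat :=
  fun l => if leaf u then (u == l : nat) else ell u l.

Definition coweight (alpha : V -> nat) (v a : V) : V -> nat :=
  fun l => if Lset v a l then alpha l else 0.

Definition admissible (alpha : V -> nat) (v a : V) : Prop :=
  dv v = \sum_(l | Lset v a l) alpha l * ell v l.

End Splice.

(* Write d_v and every l_{x,y} as a monomial in the weights at the nodes: the
   exponent of d_{z,e} in l_{x,y} is 1 exactly when z is on [x,y] and e leaves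
   [x,y]. Comparing exponents gives l_{x,y} d_w = l_{x,w} l_{w,y} for a node w on
   [x,y], and l_{x,y} d_{x,y} d_{y,x} = d_x d_y for an edge between nodes.
   Now w_u . m_{v,e} = sum alpha_l l_{u,l} and d_v = sum alpha_l l_{v,l} over the
   leaves l of L(v,e), so it suffices to compare l_{u,v} l_{v,l} with l_{u,l} d_v
   leaf by leaf. If e is not on [u,v], then v lies on [u,l] and the two are equal.
   Otherwise let b be the neighbour of v towards u; factoring both sides through
   b, the edge determinant condition at the edge vb makes the comparison strict
   as soon as it holds (weakly) at b, and it does by induction on the distance
   to u. *)

From mathcomp Require Import all_boot.
From Stdlib Require Import ClassicalEpsilon.
Set Implicit Arguments. Unset Strict Implicit. Unset Printing Implicit Defensive.

Lemma asbP (Q : Prop) : reflect Q (asb Q).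
Proof. by rewrite /asb; case: excluded_middle_informative => h; constructor. Qed.

Lemma mem_zip (T : eqType) (x y : T) (s t : seq T) :
  (x, y) \in zip s t -> x \in s /\ y \in t.
Proof.
elim: s t => [|a s IH] [|b t] //=; rewrite !in_cons.
by case/orP=> [/eqP[-> ->]|/IH[-> ->]]; rewrite ?eqxx ?orbT.
Qed.

Lemma mem_zip_last (T : eqType) (x a : T) (p q : seq T) :
  (last x p, a) \in zip (x :: p ++ a :: q) (p ++ a :: q).
Proof.
elim: p x => [|b p IH] x /=; first by rewrite in_cons eqxx.
by rewrite in_cons IH orbT.
Qed.

Lemma ltn_sum (I : finType) (P : pred I) (F G : I -> nat) i0 :
  P i0 -> F i0 < G i0 -> (forall i, P i -> F i <= G i) ->
  \sum_(i | P i) F i < \sum_(i | P i) G i.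
Proof.
move=> Pi0 ltFG leFG; rewrite (bigD1 i0) //= [X in _ < X](bigD1 i0) //=.
by rewrite -addSn leq_add // leq_sum // => i /andP[/leFG].
Qed.

Lemma weighted_ratio_eq (I : finType) (P : pred I) (w f g : I -> nat) c D :
  0 < D -> D = \sum_(i | P i) w i * g i ->
  (forall i, P i -> c * g i = f i * D) -> \sum_(i | P i) w i * f i = c.
Proof.
move=> D_gt0 defD fg; apply/eqP; rewrite -(eqn_pmul2r D_gt0) big_distrl {2}defD.
by rewrite big_distrr /=; apply/eqP/eq_bigr => i Pi; rewrite -mulnA -fg // mulnCA.
Qed.

Lemma weighted_ratio_lt (I : finType) (P : pred I) (w f g : I -> nat) c D :
  0 < D -> D = \sum_(i | P i) w i * g i ->
  (forall i, P i -> c * g i < f i * D) -> c < \sum_(i | P i) w i * f i.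
Proof.
move=> D_gt0 defD fg; have [i Pi w_gt0] : exists2 i, P i & 0 < w i.
  move: D_gt0; rewrite defD lt0n sum_nat_eq0 => /forallPn[i].
  by rewrite negb_imply muln_eq0 negb_or -!lt0n => /and3P[]; exists i.
rewrite -(ltn_pmul2r D_gt0) big_distrl {1}defD big_distrr /=.
apply: (ltn_sum Pi) => [|j Pj]; rewrite mulnCA -mulnA.
  by rewrite ltn_pmul2l ?fg.
by rewrite leq_mul2l ltnW ?fg ?orbT.
Qed.

Section SpliceDiagrams.

(** * Geodesics in a tree *)

Variables (V : finType) (adj : rel V) (d : V -> V -> nat).
Hypothesis adj_sym : forall x y, adj x y = adj y x.
Hypothesis adj_irrefl : forall x, ~~ adj x x.
Hypothesis geodesic_unique : forall u v, exists! p, gpath adj u v p.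

Definition geod (u v : V) : seq V :=
  proj1_sig (constructive_indefinite_description _ (geodesic_unique u v)).

Definition between (x y z : V) : bool := z \in x :: geod x y.

(* Equal to x when y = x. *)
Definition next (x y : V) : V := head x (geod x y).

Lemma geodP u v :
  gpath adj u v (geod u v) /\ forall p, gpath adj u v p -> geod u v = p.
Proof. by rewrite /geod; case: constructive_indefinite_description => p []. Qed.

Lemma gpath_geod u v : gpath adj u v (geod u v). Proof. by case: (geodP u v). Qed.

Lemma geodE u v p : gpath adj u v p -> geod u v = p.
Proof. by case: (geodP u v) => _; apply. Qed.

Lemma path_geod u v : path adj u (geod u v). Proof. by case: (gpath_geod u v). Qed.
Lemma last_geod u v : last u (geod u v) = v. Proof. by case: (gpath_geod u v) => _ []. Qed.
Lemma uniq_geod u v : uniq (u :: geod u v). Proof. by case: (gpath_geod u v) => _ []. Qed.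

Lemma adj_neq x y : adj x y -> x != y.
Proof. by apply: contraTneq => ->; apply: adj_irrefl. Qed.

Lemma geodxx x : geod x x = [::].
Proof. exact: geodE. Qed.

Lemma geod_adj x y : adj x y -> geod x y = [:: y].
Proof.
move=> xy; apply: geodE; do !split => //=; first by rewrite xy.
by rewrite in_cons orbF andbT adj_neq.
Qed.

Lemma geod_eq0 x y : (geod x y == [::]) = (x == y).
Proof.
apply/eqP/eqP => [e|->]; last exact: geodxx.
by rewrite -(last_geod x y) e.
Qed.

Lemma between_first x y : between x y x.
Proof. by rewrite /between mem_head. Qed.

Lemma between_last x y : between x y y.
Proof. by rewrite /between -{1}(last_geod x y) mem_last. Qed.

Lemma gpath_cat x y p1 p2 : gpath adj x y (p1 ++ p2) ->
  gpath adj x (last x p1) p1 /\ gpath adj (last x p1) y p2.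
Proof.
case; rewrite cat_path last_cat -cat_cons cat_uniq => /andP[h1 h2] [hl /and3P[u1 u2 u3]].
do !split => //=; rewrite u3 andbT.
apply: contra u2 => hm; apply/hasP; exists (last x p1) => //; exact: mem_last.
Qed.

Lemma geod_cat x y z : between x y z -> geod x y = geod x z ++ geod z y.
Proof.
rewrite /between => hz; have := gpath_geod x y.
case/splitPl: hz => p1 p2 hl /gpath_cat.
by rewrite hl => -[/geodE -> /geodE ->].
Qed.

Lemma rev_geod x y : y :: geod y x = rev (x :: geod x y).
Proof.
have hrev : rev (x :: geod x y) = y :: rev (belast x (geod x y)).
  by rewrite lastI rev_rcons last_geod.
rewrite hrev; congr (_ :: _); apply: geodE; split.
  have h : path (fun z => adj^~ z) x (geod x y).
    by rewrite (@eq_path _ _ adj) ?path_geod // => a b; rewrite adj_sym.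
  by rewrite -rev_path last_geod in h.
split; last by rewrite -hrev rev_uniq uniq_geod.
by have := congr1 (last x) hrev; rewrite rev_cons last_rcons /= => /esym.
Qed.

Lemma between_sym x y z : between x y z = between y x z.
Proof. by rewrite /between rev_geod mem_rev. Qed.

Lemma geod_cons x y a : adj x a -> between x y a -> geod x y = a :: geod a y.
Proof. by move=> xa xya; rewrite (geod_cat xya) geod_adj. Qed.

Lemma between_cat x y w t :
  between x y w -> between x y t = between x w t || between w y t.
Proof.
move=> hw; rewrite {1}/between (geod_cat hw) -cat_cons mem_cat -/(between x w t).
rewrite /between [t \in w :: _]in_cons; case: (t =P w) => [->|_] //=.
by rewrite -/(between x w w) between_last.
Qed.

Lemma between_meet x y w t :
  between x y w -> between x w t -> between w y t -> t = w.
Proof.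
move=> hw hxw; rewrite /between in_cons => /orP[/eqP //|hwy].
have := uniq_geod x y; rewrite (geod_cat hw) -cat_cons cat_uniq.
by case/and3P=> _ /hasPn /(_ t hwy) /negP[].
Qed.

Lemma next_adj x y : x != y -> adj x (next x y).
Proof.
rewrite -geod_eq0 /next; have := path_geod x y.
by case: (geod x y) => //= c p /andP[].
Qed.

Lemma between_next x y : between x y (next x y).
Proof.
by rewrite /between /next; case: (geod x y) => [|c p]; rewrite /= !inE eqxx ?orbT.
Qed.

Lemma next_eq x y a : adj x a -> between x y a -> next x y = a.
Proof. by move=> xa xya; rewrite /next (geod_cons xa xya). Qed.

Lemma next_between x y z : between x y z -> z != x -> next x y = next x z.
Proof.
move=> hz zx; rewrite /next (geod_cat hz).
by case: (geod x z) (geod_eq0 x z) => [|c p] //=; rewrite eq_sym (negbTE zx).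
Qed.

Lemma between_of_next x y w :
  w != x -> w != y -> next w x != next w y -> between x y w.
Proof.
move=> wx wy nxy.
have hq : gpath adj x y (geod x w ++ geod w y).
  split; first by rewrite cat_path path_geod last_geod path_geod.
  split; first by rewrite last_cat !last_geod.
  have /andP[wn uwy] : (w \notin geod w y) && uniq (geod w y) := uniq_geod w y.
  rewrite -cat_cons cat_uniq uniq_geod uwy andbT.
  apply/hasPn => t hwy; apply: contra nxy => hxw.
  have tw : t != w by apply: contraNneq wn => tw; rewrite -{1}tw.
  rewrite (next_between _ tw) 1?between_sym //.
  by rewrite (next_between _ tw) // /between in_cons hwy orbT.
by rewrite /between (geodE hq) -cat_cons mem_cat -/(between x w w) between_last.
Qed.

Lemma between_shift x y w z : between x y w -> between x w z -> between z y w.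
Proof.
move=> hw hz; have hxyz : between x y z by rewrite (between_cat _ hw) hz.
have : geod x z ++ geod z y == geod x z ++ (geod z w ++ geod w y).
  by rewrite -(geod_cat hxyz) (geod_cat hw) (geod_cat hz) catA.
rewrite eqseq_cat // eqxx => /eqP e.
by rewrite /between e -cat_cons mem_cat -/(between z w w) between_last.
Qed.

Lemma geod_adjacent x y z a : between x y z -> between x y a -> adj z a ->
  geod z y = a :: geod a y \/ geod a y = z :: geod z y.
Proof.
move=> hz ha za; move: (ha); rewrite (between_cat _ hz) => /orP[hxza|hzya].
  right; have : geod x a ++ geod a y == geod x a ++ z :: geod z y.
    rewrite -(geod_cat ha) (geod_cat hz) (geod_cat hxza) (@geod_adj a z) -?catA //.
    by rewrite adj_sym.
  by rewrite eqseq_cat // eqxx => /eqP.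
by left; apply: geod_cons.
Qed.

Lemma between_adj_prefix x y w z a : between x y w -> between x w z -> z != w ->
  adj z a -> between x y a -> between x w a.
Proof.
move=> hw hz zw za ha; have hxyz : between x y z by rewrite (between_cat _ hw) hz.
case: (geod_adjacent hxyz ha za) => e.
  have -> : a = next z w.
    by rewrite -(next_between (between_shift hw hz)) 1?eq_sym // /next e.
  by rewrite (between_cat _ hz) between_next orbT.
apply/contraT => hna; have hwya : between w y a.
  by move: ha; rewrite (between_cat _ hw) (negbTE hna).
have hwyz : between w y z by rewrite (between_cat _ hwya) /between e !inE eqxx !orbT.
by move: zw; rewrite (between_meet hw hz hwyz) eqxx.
Qed.

Lemma on_geodE x y w : on_geod adj x y w = between x y w.
Proof.
apply/asbP/idP => [[p [hp hw]]|hw]; first by rewrite /between (geodE hp).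
by exists (geod x y); split; first exact: gpath_geod.
Qed.

Lemma edge_onE x y w a : adj w a -> between x y w -> edge_on adj x y w a = between x y a.
Proof.
move=> wa hw; apply/asbP/idP => [[p [hp hwa]]|ha].
  rewrite /between (geodE hp).
  by case: hwa => /mem_zip[] // _ hap; rewrite in_cons hap orbT.
exists (geod x y); split; first exact: gpath_geod.
case: (geod_adjacent hw ha wa) => e.
  by left; rewrite (geod_cat hw) e -{1}(last_geod x w) mem_zip_last.
by right; rewrite (geod_cat ha) e -{1}(last_geod x a) mem_zip_last.
Qed.

Hypothesis no_valency2 : forall v, valency adj v != 2.

Lemma node_between x y z : between x y z -> z != x -> z != y -> node adj z.
Proof.
move=> hz zx zy.
have nxy : next z x != next z y.
  apply/eqP => e; have := adj_neq (next_adj zy).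
  rewrite (between_meet hz (t := next z y)) ?eqxx ?between_next //.
  by rewrite between_sym -e between_next.
have : 1 < valency adj z.
  by apply/card_gt1P; exists (next z x), (next z y); rewrite !inE !next_adj.
by rewrite /node; case: (valency adj z) (no_valency2 z) => [|[|[|k]]].
Qed.

Definition exit_edge (x y z a : V) : bool := between x y z && ~~ between x y a.

Lemma exit_edge_split x y w z a : between x y w -> adj z a ->
  exit_edge x y z a + (z == w) = exit_edge x w z a + exit_edge w y z a.
Proof.
move=> hw za; rewrite /exit_edge !(between_cat _ hw).
have meet t : between x w t -> between w y t -> t = w := between_meet hw.
case: (eqVneq z w) => [ezw|zw].
  rewrite ezw between_last between_first /=.
  case: (boolP (between x w a)) => hxa; case: (boolP (between w y a)) => hya //=.
  by move: (adj_neq za); rewrite ezw (meet _ hxa hya) eqxx.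
case: (boolP (between x w z)) => hxz /=.
  have -> : between w y z = false by apply: contraNF zw => /(meet _ hxz)/eqP.
  rewrite addn0; case: (boolP (between x w a)) => hxa //=.
  have -> // : between w y a = false.
  apply: contraNF hxa => hya; apply: (between_adj_prefix hw hxz zw za).
  by rewrite (between_cat _ hw) hya orbT.
case: (boolP (between w y z)) => hyz //=.
case: (boolP (between w y a)) => hya; rewrite ?orbT //=.
have -> // : between x w a = false.
apply: contraNF hya => hxa; rewrite between_sym.
apply: (between_adj_prefix (x := y) (y := x) (z := z)); rewrite 1?between_sym //.
by rewrite (between_cat _ hw) hxa.
Qed.

Lemma exit_edge_adj x y z a : adj x y -> adj z a ->
  exit_edge x y z a + ((z == x) && (a == y)) + ((z == y) && (a == x)) =
  (z == x) + (z == y).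
Proof.
move=> xy za; have := adj_neq xy; have := adj_neq za.
rewrite /exit_edge /between geod_adj // !inE => neq_za neq_xy.
do 4![case: eqP => [?|_]] => //=; subst; by rewrite eqxx in neq_za neq_xy.
Qed.

(** * The numbers l as monomials in the weights *)

Hypothesis weight_gt0 : forall v a, node adj v -> adj v a -> 0 < d v a.

Definition monomial (e : V -> V -> nat) : nat :=
  \prod_(z | node adj z) \prod_(a | adj z a) d z a ^ e z a.

Lemma monomialD e1 e2 :
  monomial e1 * monomial e2 = monomial (fun z a => e1 z a + e2 z a).
Proof.
rewrite -big_split; apply: eq_bigr => z _; rewrite -big_split.
by apply: eq_bigr => a _; rewrite expnD.
Qed.

Lemma eq_monomial e1 e2 :
  (forall z a, node adj z -> adj z a -> e1 z a = e2 z a) -> monomial e1 = monomial e2.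
Proof. by move=> e12; apply: eq_bigr => z nz; apply: eq_bigr => a za; rewrite e12. Qed.

Lemma monomial_gt0 e : 0 < monomial e.
Proof.
apply: prodn_cond_gt0 => z nz; apply: prodn_cond_gt0 => a za.
by rewrite expn_gt0 weight_gt0.
Qed.

Lemma weight_monomial z0 a0 : node adj z0 -> adj z0 a0 ->
  d z0 a0 = monomial (fun z a => (z == z0) && (a == a0)).
Proof.
move=> nz0 za0; rewrite /monomial (bigD1 z0) //=.
rewrite [X in _ * X]big1 => [|z /andP[_ /negbTE ->]].
  rewrite muln1 (bigD1 a0) //= [X in _ * X]big1 => [|a /andP[_ /negbTE ->]].
    by rewrite muln1 !eqxx.
  by rewrite andbF expn0.
by rewrite big1.
Qed.

Lemma dv_monomial w : node adj w -> dv adj d w = monomial (fun z _ => z == w).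
Proof.
move=> nw; rewrite /monomial (bigD1 w) //=.
rewrite [X in _ * X]big1 => [|z /andP[_ /negbTE ->]].
  by rewrite muln1; apply: eq_bigr => a _; rewrite eqxx.
by rewrite big1.
Qed.

Lemma ellxx x : ell adj d x x = dv adj d x.
Proof. by rewrite /ell eqxx. Qed.

Lemma ell_monomial x y : (x != y) || node adj x ->
  ell adj d x y = monomial (exit_edge x y).
Proof.
case: (eqVneq x y) => [<- /= nx|xy _].
  rewrite ellxx dv_monomial //; apply: eq_monomial => z a _ za.
  rewrite /exit_edge /between geodxx !inE.
  by case: (eqVneq z x) => // <-; rewrite eq_sym adj_neq.
rewrite /ell (negbTE xy) big_mkcondr; apply: eq_bigr => z nz.
rewrite on_geodE /exit_edge; case: (boolP (between x y z)) => hz /=.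
  rewrite big_mkcondr; apply: eq_bigr => a za; rewrite edge_onE //.
  by case: (between x y a).
by rewrite big1.
Qed.

Lemma ell_sym x y : ell adj d x y = ell adj d y x.
Proof.
case: (eqVneq x y) => [-> //|xy]; rewrite !ell_monomial ?xy 1?eq_sym ?xy //.
by apply: eq_monomial => z a _ _; rewrite /exit_edge !(between_sym x y).
Qed.

Lemma ell_gt0 x y : (x != y) || node adj x -> 0 < ell adj d x y.
Proof. by move=> h; rewrite ell_monomial ?monomial_gt0. Qed.

Lemma dv_gt0 w : node adj w -> 0 < dv adj d w.
Proof. by move=> nw; rewrite dv_monomial ?monomial_gt0. Qed.

Lemma ell_split x y w : between x y w -> node adj w ->
  ell adj d x y * dv adj d w = ell adj d x w * ell adj d w y.
Proof.
move=> hw nw; have ell_w t : (t != w) || node adj t.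
  by case: (eqVneq t w) => // ->.
have ell_xy : (x != y) || node adj x.
  by case: (eqVneq x y) hw => //= <-; rewrite /between geodxx inE => /eqP <-.
rewrite dv_monomial // (ell_monomial ell_xy) (ell_monomial (ell_w x)).
rewrite ell_monomial ?nw ?orbT // !monomialD.
by apply: eq_monomial => z a _ za; apply: exit_edge_split.
Qed.

Lemma ell_adj x y : adj x y -> node adj x -> node adj y ->
  ell adj d x y * (d x y * d y x) = dv adj d x * dv adj d y.
Proof.
move=> xy nx ny; rewrite ell_monomial ?adj_neq // (weight_monomial nx xy).
rewrite (weight_monomial ny) 1?adj_sym // !dv_monomial // !monomialD.
by apply: eq_monomial => z a _ za; rewrite addnA; apply: exit_edge_adj.
Qed.

(** * Comparing l_{u,v} l_{v,l} with l_{u,l} d_v *)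

Hypothesis edge_det : edge_determinant adj d.

Lemma leafN_node l : leaf adj l -> ~~ node adj l.
Proof. by rewrite /leaf /node => /eqP ->. Qed.

Lemma node_next v u : node adj u -> node adj (next v u).
Proof.
move=> nu; case: (eqVneq v u) => [->|vu]; first by rewrite /next geodxx.
case: (eqVneq (next v u) u) => [-> //|bu].
apply: (node_between (between_next v u)) => //.
by rewrite eq_sym adj_neq ?next_adj.
Qed.

Lemma ell_sq_lt x y : adj x y -> node adj x -> node adj y ->
  ell adj d x y * ell adj d x y < dv adj d x * dv adj d y.
Proof.
by move=> xy nx ny; rewrite -(ell_adj xy nx ny) ltn_pmul2l ?edge_det // ell_gt0 ?adj_neq.
Qed.

Lemma ell_lt_step u v b l : node adj u -> node adj v -> node adj b -> adj v b ->
  between v u b -> between v l b ->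
  ell adj d u b * ell adj d b l <= ell adj d u l * dv adj d b ->
  ell adj d u v * ell adj d v l < ell adj d u l * dv adj d v.
Proof.
move=> nu nv nb vb hu hl le_b; have Db_gt0 := dv_gt0 nb.
have Db2_gt0 : 0 < dv adj d b * dv adj d b by rewrite muln_gt0 Db_gt0.
rewrite -(ltn_pmul2r Db2_gt0) mulnACA (ell_sym u v).
rewrite (ell_split hu nb) (ell_split hl nb) mulnACA (ell_sym b u).
apply: (leq_ltn_trans (leq_mul (leqnn _) le_b)).
have -> : ell adj d u l * dv adj d v * (dv adj d b * dv adj d b) =
          dv adj d v * dv adj d b * (ell adj d u l * dv adj d b).
  by rewrite mulnACA mulnC.
by rewrite ltn_pmul2r ?ell_sq_lt // muln_gt0 Db_gt0 ell_gt0 // nu orbT.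
Qed.

Lemma ell_leaf_eq u v l : node adj v -> v != u -> ~~ node adj l ->
  ~~ between v l (next v u) ->
  ell adj d u v * ell adj d v l = ell adj d u l * dv adj d v.
Proof.
move=> nv vu nl hb; have vl : v != l by apply: contraNneq nl => <-.
have huvl : between u l v.
  by apply: between_of_next => //; apply: contraNneq hb => ->; apply: between_next.
by rewrite (ell_split huvl nv).
Qed.

Lemma ell_leaf_le u v l : node adj u -> node adj v -> ~~ node adj l ->
  ell adj d u v * ell adj d v l <= ell adj d u l * dv adj d v.
Proof.
move=> nu; have [n] := ubnP (size (geod v u)); elim: n v => // n IH v.
rewrite ltnS => size_vu nv nl; case: (eqVneq v u) => [->|vu].
  by rewrite ellxx mulnC.
have [vb hb] := (next_adj vu, between_next v u).
case: (boolP (between v l (next v u))) => hl; last by rewrite ell_leaf_eq.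
apply/ltnW/(ell_lt_step nu nv (node_next v nu) vb hb hl)/IH; rewrite ?node_next //.
by move: size_vu; rewrite (geod_cons vb hb).
Qed.

Lemma ell_leaf_lt u v l : node adj u -> node adj v -> ~~ node adj l -> v != u ->
  between v l (next v u) ->
  ell adj d u v * ell adj d v l < ell adj d u l * dv adj d v.
Proof.
move=> nu nv nl vu hl.
apply: (ell_lt_step nu nv (node_next v nu) (next_adj vu) (between_next v u) hl).
exact: ell_leaf_le (node_next v nu) nl.
Qed.

Lemma ell_branch_lt u v a l : node adj u -> node adj v -> adj v a -> ~~ node adj l ->
  between v l a -> between v u a ->
  ell adj d u v * ell adj d v l < ell adj d u l * dv adj d v.
Proof.
move=> nu nv va nl hl hu; apply: ell_leaf_lt; rewrite ?(next_eq va hu) //.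
by apply: contraTneq hu => <-; rewrite /between geodxx inE eq_sym adj_neq.
Qed.

Lemma ell_branch_eq u v a l : node adj v -> adj v a -> ~~ node adj l ->
  between v l a -> ~~ between v u a ->
  ell adj d u v * ell adj d v l = ell adj d u l * dv adj d v.
Proof.
move=> nv va nl hl hu; case: (eqVneq v u) => [->|vu]; first by rewrite ellxx mulnC.
apply: ell_leaf_eq => //; apply: contra hu => hb.
by rewrite -(next_eq va hl) (next_eq (next_adj vu) hb) between_next.
Qed.

Lemma Lset_between v a l : adj v a -> Lset adj v a l -> ~~ node adj l /\ between v l a.
Proof. by move=> va /andP[/leafN_node nl]; rewrite edge_onE ?between_first. Qed.

Lemma dotv_coweight u v a (alpha : V -> nat) : ~~ leaf adj u ->
  dotv adj (wvec adj d u) (coweight adj alpha v a) =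
  \sum_(l | Lset adj v a l) alpha l * ell adj d u l.
Proof.
move=> lu; rewrite /dotv /wvec /coweight (negbTE lu) [RHS]big_mkcond [LHS]big_mkcond.
apply: eq_bigr => l _; rewrite /Lset /=.
by case: (leaf adj l); case: edge_on; rewrite //= mulnC.
Qed.

Lemma wvec_coweight_ge u v a (alpha : V -> nat) :
  node adj u -> node adj v -> adj v a -> admissible adj d alpha v a ->
  ell adj d u v <= dotv adj (wvec adj d u) (coweight adj alpha v a) /\
  (dotv adj (wvec adj d u) (coweight adj alpha v a) = ell adj d u v
     <-> ~~ edge_on adj u v v a).
Proof.
move=> nu nv va adm; have Dv_gt0 := dv_gt0 nv.
rewrite dotv_coweight ?(contraL (@leafN_node u) nu) // edge_onE ?between_last //.
rewrite between_sym; case: (boolP (between v u a)) => hu /=.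
  have lt : ell adj d u v < \sum_(l | Lset adj v a l) alpha l * ell adj d u l.
    apply: (weighted_ratio_lt Dv_gt0 adm) => l /(Lset_between va)[nl hl].
    exact: (ell_branch_lt nu nv va).
  by split=> [|]; [exact: ltnW | split=> // eq_u; rewrite eq_u ltnn in lt].
rewrite (weighted_ratio_eq (c := ell adj d u v) Dv_gt0 adm) //.
by move=> l /(Lset_between va)[nl hl]; apply: (ell_branch_eq nv va).
Qed.

End SpliceDiagrams.

Theorem lemma2p17 (V : finType) (adj : rel V) (d : V -> V -> nat) :
  splice_diagram adj d ->
  edge_determinant adj d ->
  semigroup_cond adj d ->
  forall (u v a : V) (alpha : V -> nat),
    node adj u -> node adj v -> adj v a ->
    admissible adj d alpha v a ->
    ell adj d u v <= dotv adj (wvec adj d u) (coweight adj alpha v a) /\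
    (dotv adj (wvec adj d u) (coweight adj alpha v a) = ell adj d u v
       <-> ~~ edge_on adj u v v a).
Proof.
(* The semigroup condition only ensures that admissible co-weights exist. *)
move=> [[adj_sym [adj_irrefl geodesic_unique]] [_ [no_valency2 weight_gt0]]] edge_det _.
exact: wvec_coweight_ge.
Qed.
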